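(* Let $\mathcal H$ be a class of complete CAT(0) spaces, and let $H$ be a non-elementary hyperbolic group such that every isometric action of $H$ on any space $X\in\mathcal H$ has a non-empty fixed point set. Let $Q$ be a finitely presented group and let $1\to N\to G\xrightarrow{\pi} Q\to 1$ be a short exact sequence in which $G$ is hyperbolic and $N$ is isomorphic to a quotient group of $H$. Then every minimal isometric action of $G$ on any space $X\in\mathcal H$ factors through $\pi$ (i.e. $N$ acts trivially). Consequently, composing with $\pi$ gives a bijection between minimal isometric actions of $Q$ and minimal isometric actions of $G$ on spaces in $\mathcal H$.
   Context: An isometric action of a group on a complete CAT(0) space $X$ is minimal if $X$ is the only non-empty closed convex invariant subspace. Hyperbolic means word hyperbolic; non-elementary means not virtually cyclic. *)

From Stdlib Require Import Reals Lra ZArith List Relations.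
Import ListNotations.
Open Scope R_scope.

Record group := Group {
  gcar :> Type;
  gmul : gcar -> gcar -> gcar;
  gone : gcar;
  ginv : gcar -> gcar;
  gmulA : forall x y z, gmul x (gmul y z) = gmul (gmul x y) z;
  gmul1 : forall x, gmul gone x = x;
  gmulV : forall x, gmul (ginv x) x = gone }.

Arguments gmul {g}. Arguments gone {g}. Arguments ginv {g}.

Definition is_hom {G K : group} (f : G -> K) : Prop :=
  forall x y, f (gmul x y) = gmul (f x) (f y).

Definition short_exact {N G Q : group} (i : N -> G) (p : G -> Q) : Prop :=
  is_hom i /\ is_hom p /\ (forall x y, i x = i y -> x = y) /\
  (forall q, exists g, p g = q) /\
  (forall g, p g = gone <-> exists n, i n = g).

(* a letter (s,false) stands for s, (s,true) for s^-1 *)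
Definition gword (G : group) := list (G * bool).

Definition letter_val {G : group} (l : G * bool) : G :=
  if snd l then ginv (fst l) else fst l.

Definition word_eval {G : group} (w : gword G) : G :=
  fold_right (fun l acc => gmul (letter_val l) acc) gone w.

Definition letters_in {G : group} (S : list G) (w : gword G) : Prop :=
  Forall (fun l => In (fst l) S) w.

Definition generates {G : group} (S : list G) : Prop :=
  forall g : G, exists w, letters_in S w /\ word_eval w = g.

Definition word_len {G : group} (S : list G) (g : G) (n : nat) : Prop :=
  (exists w, letters_in S w /\ word_eval w = g /\ length w = n) /\
  (forall w, letters_in S w -> word_eval w = g -> (n <= length w)%nat).

Definition word_dist {G : group} (S : list G) (x y : G) (n : nat) : Prop :=
  word_len S (gmul (ginv x) y) n.

(* word hyperbolic: finitely generated, word metric is Gromov hyperbolic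
   (four-point condition) *)
Definition hyperbolic_group (G : group) : Prop :=
  exists S : list G, generates S /\
  exists delta : R, 0 <= delta /\
  forall (x y z w : G) (nxy nzw nxz nyw nxw nyz : nat),
    word_dist S x y nxy -> word_dist S z w nzw -> word_dist S x z nxz ->
    word_dist S y w nyw -> word_dist S x w nxw -> word_dist S y z nyz ->
    INR nxy + INR nzw <= Rmax (INR nxz + INR nyw) (INR nxw + INR nyz) + 2 * delta.

Fixpoint gpow {G : group} (g : G) (n : nat) : G :=
  match n with O => gone | S m => gmul g (gpow g m) end.

Definition gpowZ {G : group} (g : G) (k : Z) : G :=
  if Z.leb 0 k then gpow g (Z.abs_nat k) else gpow (ginv g) (Z.abs_nat k).

(* virtually cyclic: some cyclic subgroup <g> has finite index *)
Definition virtually_cyclic (G : group) : Prop :=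
  exists (g : G) (reps : list G),
    forall x : G, exists r k, In r reps /\ x = gmul r (gpowZ g k).

Definition non_elementary (G : group) : Prop := ~ virtually_cyclic G.

Inductive pres_step {G : group} (S : list G) (Rl : list (gword G))
  : gword G -> gword G -> Prop :=
| ps_cancel : forall u v x b, In x S ->
    pres_step S Rl (u ++ (x, b) :: (x, negb b) :: v) (u ++ v)
| ps_rel : forall u v r, In r Rl -> pres_step S Rl (u ++ r ++ v) (u ++ v).

Definition finitely_presented (G : group) : Prop :=
  exists (S : list G) (Rl : list (gword G)),
    generates S /\
    Forall (letters_in S) Rl /\
    Forall (fun r => word_eval r = gone) Rl /\
    forall w, letters_in S w -> word_eval w = gone ->
      clos_refl_sym_trans _ (pres_step S Rl) w nil.

Definition metric {X : Type} (d : X -> X -> R) : Prop :=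
  (forall x y, 0 <= d x y) /\ (forall x y, d x y = 0 <-> x = y) /\
  (forall x y, d x y = d y x) /\ (forall x y z, d x z <= d x y + d y z).

Definition converges {X : Type} (d : X -> X -> R) (u : nat -> X) (l : X) : Prop :=
  forall eps, 0 < eps -> exists N, forall n, (N <= n)%nat -> d (u n) l < eps.

Definition cauchy {X : Type} (d : X -> X -> R) (u : nat -> X) : Prop :=
  forall eps, 0 < eps -> exists N, forall m n, (N <= m)%nat -> (N <= n)%nat ->
    d (u m) (u n) < eps.

Definition complete {X : Type} (d : X -> X -> R) : Prop :=
  forall u, cauchy d u -> exists l, converges d u l.

Definition geodesic {X : Type} (d : X -> X -> R) (x y : X) (c : R -> X) : Prop :=
  c 0 = x /\ c (d x y) = y /\
  forall s t, 0 <= s <= d x y -> 0 <= t <= d x y -> d (c s) (c t) = Rabs (s - t).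

Definition geodesic_space {X : Type} (d : X -> X -> R) : Prop :=
  forall x y, exists c, geodesic d x y c.

Definition eucl (p q : R * R) : R :=
  sqrt ((fst p - fst q) ^ 2 + (snd p - snd q) ^ 2).

Definition seg_point (a b : R * R) (L s : R) : R * R :=
  (fst a + (s / L) * (fst b - fst a), snd a + (s / L) * (snd b - snd a)).

(* CAT(0) inequality for the geodesic triangle with sides c1 : [x,y],
   c2 : [y,z], c3 : [z,x] and comparison triangle a b e in R^2 *)
Definition cat0_triangle {X : Type} (d : X -> X -> R) (x y z : X)
  (c1 c2 c3 : R -> X) (a b e : R * R) : Prop :=
  let sides := [(c1, d x y, a, b); (c2, d y z, b, e); (c3, d z x, e, a)] in
  forall (g h : R -> X) (Lg Lh : R) (ga gb ha hb : R * R) (s t : R),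
    In (g, Lg, ga, gb) sides -> In (h, Lh, ha, hb) sides ->
    0 <= s <= Lg -> 0 <= t <= Lh ->
    d (g s) (h t) <= eucl (seg_point ga gb Lg s) (seg_point ha hb Lh t).

Definition CAT0 {X : Type} (d : X -> X -> R) : Prop :=
  metric d /\ geodesic_space d /\
  forall (x y z : X) (c1 c2 c3 : R -> X) (a b e : R * R),
    geodesic d x y c1 -> geodesic d y z c2 -> geodesic d z x c3 ->
    eucl a b = d x y -> eucl b e = d y z -> eucl e a = d z x ->
    cat0_triangle d x y z c1 c2 c3 a b e.

Definition complete_CAT0 {X : Type} (d : X -> X -> R) : Prop :=
  CAT0 d /\ complete d.

Definition isometric_action (G : group) {X : Type} (d : X -> X -> R)
  (act : G -> X -> X) : Prop :=
  (forall x, act gone x = x) /\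
  (forall g h x, act (gmul g h) x = act g (act h x)) /\
  (forall g x y, d (act g x) (act g y) = d x y).

Definition closed_set {X : Type} (d : X -> X -> R) (C : X -> Prop) : Prop :=
  forall u l, (forall n, C (u n)) -> converges d u l -> C l.

Definition convex_set {X : Type} (d : X -> X -> R) (C : X -> Prop) : Prop :=
  forall x y c, C x -> C y -> geodesic d x y c ->
    forall s, 0 <= s <= d x y -> C (c s).

Definition minimal_action (G : group) {X : Type} (d : X -> X -> R)
  (act : G -> X -> X) : Prop :=
  isometric_action G d act /\
  forall C : X -> Prop,
    (exists x, C x) -> closed_set d C -> convex_set d C ->
    (forall g x, C x -> C (act g x)) -> forall x, C x.

Definition space_class := forall X : Type, (X -> X -> R) -> Prop.

From Stdlib Require Import Reals Lra IndefiniteDescription.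
Open Scope R_scope.

(* In a minimal action of G on a complete CAT(0) space X, the fixed-point set
   of N is non-empty (N is a quotient of H, and every action of H on X has a
   fixed point), closed and convex (an intersection of fixed-point sets of
   isometries, convex because geodesics are unique), and G-invariant (N is
   normal). Minimality forces it to be all of X, so G acts through Q. *)

Lemma gmulVr (G : group) (x : G) : gmul x (ginv x) = gone.
Proof.
  transitivity (gmul (gmul (ginv (ginv x)) (ginv x)) (gmul x (ginv x))).
  - rewrite gmulV, gmul1. reflexivity.
  - rewrite <- gmulA, (gmulA _ (ginv x) x (ginv x)), gmulV, gmul1, gmulV.
    reflexivity.
Qed.

Lemma hom_one {A B : group} (f : A -> B) : is_hom f -> f gone = gone.
Proof.
  intro Hf. pose proof (Hf gone gone) as E. rewrite gmul1 in E.
  rewrite <- (gmulV _ (f gone)). rewrite E at 3.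
  rewrite gmulA, gmulV, gmul1. reflexivity.
Qed.

Lemma hom_ldiv_one {A B : group} (f : A -> B) (g h : A) :
  is_hom f -> f g = f h -> f (gmul (ginv g) h) = gone.
Proof.
  intros Hf E. rewrite Hf, <- E, <- Hf, gmulV. exact (hom_one f Hf).
Qed.

Section ShortExact.
Context {N G Q : group} {i : N -> G} {p : G -> Q}.
Hypothesis ses : short_exact i p.

Lemma short_exact_fibre (g g' : G) :
  p g = p g' -> exists n, g' = gmul g (i n).
Proof.
  destruct ses as (_ & hp & _ & _ & pker). intro E.
  destruct (proj1 (pker _) (hom_ldiv_one p g g' hp E)) as [n Hn].
  exists n. rewrite Hn, gmulA, gmulVr, gmul1. reflexivity.
Qed.

Lemma short_exact_normal (n : N) (g : G) :
  exists n', gmul (i n) g = gmul g (i n').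
Proof.
  destruct ses as (_ & hp & _ & _ & pker).
  apply short_exact_fibre.
  rewrite hp, (proj2 (pker (i n)) (ex_intro _ n eq_refl)), gmul1. reflexivity.
Qed.

End ShortExact.

Section Isometries.
Context {X : Type} (d : X -> X -> R).

Definition isometry (f : X -> X) : Prop := forall x y, d (f x) (f y) = d x y.

Lemma closed_set_forall {I : Type} (C : I -> X -> Prop) :
  (forall j, closed_set d (C j)) -> closed_set d (fun x => forall j, C j x).
Proof. intros HC u l Hu Hl j. exact (HC j u l (fun n => Hu n j) Hl). Qed.

Lemma convex_set_forall {I : Type} (C : I -> X -> Prop) :
  (forall j, convex_set d (C j)) -> convex_set d (fun x => forall j, C j x).
Proof. intros HC x y c Cx Cy Hc s Hs j. exact (HC j x y c (Cx j) (Cy j) Hc s Hs). Qed.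

Lemma closed_set_fixed (f : X -> X) :
  metric d -> isometry f -> closed_set d (fun x => f x = x).
Proof.
  intros (Hpos & Hzero & Hsym & Htri) Hf u l Hu Hl. apply Hzero.
  set (D := d (f l) l).
  destruct (Req_dec D 0) as [HD|HD]; [exact HD|exfalso].
  assert (Dpos : 0 < D) by (pose proof (Hpos (f l) l); unfold D in *; lra).
  destruct (Hl (D / 2)) as [K HK]; [lra|].
  specialize (HK K (le_n K)).
  (* d (f l) l <= d (f l) (f (u K)) + d (u K) l = 2 d (u K) l < D *)
  pose proof (Htri (f l) (f (u K)) l) as T.
  rewrite Hf, (Hu K), (Hsym l (u K)) in T. fold D in T. lra.
Qed.

Lemma geodesic_rev (x y : X) (c : R -> X) :
  (forall a b, d a b = d b a) ->
  geodesic d x y c -> geodesic d y x (fun t => c (d x y - t)).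
Proof.
  intros Hsym (c0 & cL & cd). unfold geodesic. rewrite (Hsym y x). split; [|split].
  - rewrite Rminus_0_r. exact cL.
  - rewrite Rminus_diag. exact c0.
  - intros s t Hs Ht. rewrite cd by lra.
    replace (d x y - s - (d x y - t)) with (- (s - t)) by ring. apply Rabs_Ropp.
Qed.

Lemma geodesic_const (x : X) : d x x = 0 -> geodesic d x x (fun _ => x).
Proof.
  intro Hxx. split; [reflexivity|split; [reflexivity|]].
  intros s t Hs Ht. rewrite Hxx in Hs, Ht.
  replace s with 0 by lra. replace t with 0 by lra.
  rewrite Rminus_diag, Rabs_R0. exact Hxx.
Qed.

Lemma eucl_axis (a b : R) : eucl (a, 0) (b, 0) = Rabs (a - b).
Proof.
  unfold eucl; simpl. rewrite <- sqrt_Rsqr_abs. f_equal. unfold Rsqr. ring.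
Qed.

(* Two geodesics c, c' from x to y bound the degenerate triangle (x, y, x) with
   sides c, c' reversed and the constant path; its comparison triangle lies on
   a line, where c s and c' s have the same comparison point. *)
Lemma geodesic_unique (x y : X) (c c' : R -> X) :
  CAT0 d -> geodesic d x y c -> geodesic d x y c' ->
  forall s, 0 <= s <= d x y -> c s = c' s.
Proof.
  intros ((Hpos & Hzero & Hsym & _) & _ & Hcat) Hc Hc' s Hs.
  set (L := d x y) in *.
  destruct (Req_dec L 0) as [HL|HL].
  { assert (s = 0) by lra. subst s.
    destruct Hc as [-> _], Hc' as [-> _]. reflexivity. }
  assert (Hxx : d x x = 0) by (apply Hzero; reflexivity).
  assert (Hyx : d y x = L) by apply Hsym.
  assert (HLpos : 0 <= L) by apply Hpos.
  assert (E1 : eucl (0, 0) (L, 0) = L)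
    by (rewrite eucl_axis, Rminus_0_l, Rabs_Ropp; apply Rabs_pos_eq; lra).
  assert (E2 : eucl (L, 0) (0, 0) = L)
    by (rewrite eucl_axis, Rminus_0_r; apply Rabs_pos_eq; lra).
  assert (E3 : eucl (0, 0) (0, 0) = 0)
    by (rewrite eucl_axis, Rminus_0_r; apply Rabs_R0).
  pose proof (Hcat x y x c _ _ (0, 0) (L, 0) (0, 0) Hc
    (geodesic_rev x y c' Hsym Hc') (geodesic_const x Hxx)) as T.
  rewrite Hyx, Hxx in T. specialize (T E1 E2 E3).
  unfold cat0_triangle in T; cbv zeta in T. rewrite Hyx in T.
  specialize (T c (fun t => c' (L - t)) L L (0, 0) (L, 0) (L, 0) (0, 0) s (L - s)
    (or_introl eq_refl) (or_intror (or_introl eq_refl)) Hs ltac:(lra)).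
  unfold seg_point in T; simpl in T.
  replace (L - (L - s)) with s in T by ring.
  replace (0 + s / L * (L - 0)) with s in T by (field; exact HL).
  replace (L + (L - s) / L * (0 - L)) with s in T by (field; exact HL).
  replace (0 + s / L * (0 - 0)) with 0 in T by ring.
  replace (0 + (L - s) / L * (0 - 0)) with 0 in T by ring.
  rewrite eucl_axis, Rminus_diag, Rabs_R0 in T.
  apply Hzero. pose proof (Hpos (c s) (c' s)). lra.
Qed.

Lemma convex_set_fixed (f : X -> X) :
  CAT0 d -> isometry f -> convex_set d (fun x => f x = x).
Proof.
  intros Hcat Hf x y c Hx Hy Hc s Hs.
  assert (Hfc : geodesic d x y (fun t => f (c t))).
  { destruct Hc as (c0 & cL & cd). split; [|split].
    - rewrite c0. exact Hx.
    - rewrite cL. exact Hy.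
    - intros u v Hu Hv. rewrite Hf. exact (cd u v Hu Hv). }
  symmetry. exact (geodesic_unique x y c _ Hcat Hc Hfc s Hs).
Qed.

End Isometries.

Section Actions.
Context {X : Type} (d : X -> X -> R).

Lemma isometric_action_hom {A B : group} (f : A -> B) (b : B -> X -> X) :
  is_hom f -> isometric_action B d b -> isometric_action A d (fun g => b (f g)).
Proof.
  intros Hf (b1 & bM & bI). split; [|split].
  - intro x. rewrite (hom_one f Hf). apply b1.
  - intros g h x. rewrite Hf. apply bM.
  - intros g. apply bI.
Qed.

Lemma minimal_action_hom_surj {A B : group} (f : A -> B) (b : B -> X -> X) :
  is_hom f -> (forall y, exists g, f g = y) ->
  minimal_action B d b -> minimal_action A d (fun g => b (f g)).
Proof.
  intros Hf fsurj (Hb & bmin). split; [exact (isometric_action_hom f b Hf Hb)|].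
  intros C Cne Ccl Ccv Cinv. apply bmin; auto.
  intros y x Cx. destruct (fsurj y) as [g <-]. exact (Cinv g x Cx).
Qed.

Lemma minimal_action_factor {A B : group} (f : A -> B) (a : A -> X -> X)
  (b : B -> X -> X) :
  (forall y, exists g, f g = y) -> isometric_action B d b ->
  minimal_action A d a -> (forall g x, a g x = b (f g) x) -> minimal_action B d b.
Proof.
  intros fsurj Hb (_ & amin) Eab. split; [exact Hb|].
  intros C Cne Ccl Ccv Cinv. apply amin; auto.
  intros g x Cx. rewrite Eab. exact (Cinv (f g) x Cx).
Qed.

Context {N G Q : group} {i : N -> G} {p : G -> Q}.
Hypothesis ses : short_exact i p.

Lemma isometric_action_factor (a : G -> X -> X) :
  isometric_action G d a -> (forall n x, a (i n) x = x) ->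
  exists b : Q -> X -> X,
    isometric_action Q d b /\ forall g x, a g x = b (p g) x.
Proof.
  intros Ha trivN. pose proof Ha as (a1 & aM & aI).
  pose proof ses as (_ & hp & _ & psurj & _).
  assert (Hfib : forall g g' x, p g = p g' -> a g x = a g' x).
  { intros g g' x E. destruct (short_exact_fibre ses g g' E) as [n ->].
    rewrite aM, trivN. reflexivity. }
  pose (sec q := proj1_sig (constructive_indefinite_description _ (psurj q))).
  assert (Hsec : forall q, p (sec q) = q)
    by (intro q; exact (proj2_sig (constructive_indefinite_description _ (psurj q)))).
  exists (fun q => a (sec q)). split; [split; [|split]|].
  - intro x. rewrite (Hfib _ gone) by (rewrite Hsec; exact (eq_sym (hom_one p hp))).
    apply a1.
  - intros q q' x. rewrite (Hfib _ (gmul (sec q) (sec q'))) by (rewrite hp, !Hsec; reflexivity).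
    apply aM.
  - intro q. apply aI.
  - intros g x. apply Hfib. rewrite Hsec. reflexivity.
Qed.

Lemma minimal_action_normal_trivial (a : G -> X -> X) :
  CAT0 d -> minimal_action G d a -> (exists x0, forall n, a (i n) x0 = x0) ->
  forall n x, a (i n) x = x.
Proof.
  intros Hcat ((_ & aM & aI) & amin) Hfix n x.
  revert n. apply (amin (fun y => forall n, a (i n) y = y)).
  - exact Hfix.
  - apply closed_set_forall. intro n. apply closed_set_fixed; [apply Hcat|exact (aI (i n))].
  - apply convex_set_forall. intro n. apply convex_set_fixed; [exact Hcat|exact (aI (i n))].
  - intros g y Hy n. destruct (short_exact_normal ses n g) as [n' E].
    rewrite <- aM, E, aM, Hy. reflexivity.
Qed.

End Actions.

Theorem corollary3p3
  (Hcl : space_class)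
  (Hcl_cat0 : forall (X : Type) (d : X -> X -> R), Hcl X d -> complete_CAT0 d)
  (H N G Q : group)
  (hypH : hyperbolic_group H) (neH : non_elementary H)
  (fixH : forall (X : Type) (d : X -> X -> R), Hcl X d ->
     forall act : H -> X -> X, isometric_action H d act ->
     exists x : X, forall h : H, act h x = x)
  (fpQ : finitely_presented Q)
  (i : N -> G) (p : G -> Q) (ses : short_exact i p)
  (hypG : hyperbolic_group G)
  (quotN : exists f : H -> N, is_hom f /\ forall n : N, exists h, f h = n) :
  forall (X : Type) (d : X -> X -> R), Hcl X d ->
    (forall a : G -> X -> X, minimal_action G d a ->
       forall (n : N) (x : X), a (i n) x = x) /\
    (forall b : Q -> X -> X, minimal_action Q d b ->
       minimal_action G d (fun g => b (p g))) /\
    (forall a : G -> X -> X, minimal_action G d a ->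
       (exists b : Q -> X -> X, minimal_action Q d b /\
          forall g x, a g x = b (p g) x) /\
       (forall b b' : Q -> X -> X,
          (forall g x, a g x = b (p g) x) -> (forall g x, a g x = b' (p g) x) ->
          forall q x, b q x = b' q x)).
Proof.
  intros X d HX.
  destruct (Hcl_cat0 X d HX) as [Hcat _].
  destruct quotN as (f & hf & fsurj).
  pose proof ses as (hi & hp & _ & psurj & _).
  assert (trivN : forall a, minimal_action G d a -> forall n x, a (i n) x = x).
  { intros a Ha. apply (minimal_action_normal_trivial d ses a Hcat Ha).
    destruct (fixH X d HX (fun h => a (i (f h)))) as [x0 Hx0].
    - apply (isometric_action_hom d f (fun n => a (i n)) hf).
      exact (isometric_action_hom d i a hi (proj1 Ha)).
    - exists x0. intro n. destruct (fsurj n) as [h <-]. apply Hx0. }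
  split; [exact trivN|split].
  - intros b Hb. exact (minimal_action_hom_surj d p b hp psurj Hb).
  - intros a Ha. split.
    + destruct (isometric_action_factor d ses a (proj1 Ha) (trivN a Ha))
        as (b & Hb & Eab).
      exists b. split; [exact (minimal_action_factor d p a b psurj Hb Ha Eab)|exact Eab].
    + intros b b' Eb Eb' q x. destruct (psurj q) as [g <-].
      rewrite <- Eb, <- Eb'. reflexivity.
Qed.
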